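(* Let $\mathcal{X}$ be a Banach space and $\mathcal{U}=\mathcal{X}^*$ (duality pairing $\langle\cdot,\cdot\rangle_{\mathcal{U},\mathcal{X}}$), $\mathcal{W},\mathcal{Y}$ reflexive Banach spaces, $\mathcal{G}$ a Hilbert space, $g^\delta\in\mathcal{G}$, $\alpha>0$, $A\in L(\mathcal{Y},\mathcal{W}^* )$ continuously invertible, $B\in L(\mathcal{U},\mathcal{W}^* )$ admitting $B^*\in L(\mathcal{W},\mathcal{X})$ with $\langle Bu,w\rangle_{\mathcal{W}^*,\mathcal{W}}=\langle u,B^*w\rangle_{\mathcal{U},\mathcal{X}}$ for all $u\in\mathcal{U}$, $w\in\mathcal{W}$, and $C\in L(\mathcal{Y},\mathcal{G})$. Let $\mathcal{R}_\alpha$ be the indicator function of $B^\mathcal{U}_{1/\alpha}=\{u\in\mathcal{U}:\|u\|_\mathcal{U}\le1/\alpha\}$ and $J_\alpha(u,y)=\frac12\|Cy-g^\delta\|_\mathcal{G}^2+\mathcal{R}_\alpha(u)$. Let $\mathcal{U}_h\subset\mathcal{U}$, $\mathcal{Y}_h\subset\mathcal{Y}$, $\mathcal{W}_h\subset\mathcal{W}$ be finite-dimensional subspaces. Let $(\bar u,\bar y)$ minimize $J_\alpha$ over $\mathcal{U}\times\mathcal{Y}$ subject to $Ay=Bu$, and let $(\bar u_h,\bar y_h)$ minimize $J_\alpha$ over $\mathcal{U}_h\times\mathcal{Y}_h$ subject to $\langle Ay-Bu,w_h\rangle_{\mathcal{W}^*,\mathcal{W}}=0$ for all $w_h\in\mathcal{W}_h$,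 with $\bar w_h\in\mathcal{W}_h$ such that $$\langle C^*(C\bar y_h-g^\delta)+A^*\bar w_h,y_h\rangle_{\mathcal{Y}^*,\mathcal{Y}}=0\ \forall y_h\in\mathcal{Y}_h,\quad \bar u_h\in B^{\mathcal{U}_h}_{1/\alpha},\ \ \langle u_h-\bar u_h,B^*\bar w_h\rangle_{\mathcal{U},\mathcal{X}}\le0\ \forall u_h\in B^{\mathcal{U}_h}_{1/\alpha},$$ where $B^{\mathcal{U}_h}_{1/\alpha}=B^\mathcal{U}_{1/\alpha}\cap\mathcal{U}_h$. Let $\mathcal{J}^\mathcal{X}:\mathcal{X}\to\mathcal{U}$ be a duality mapping, i.e. $\|\mathcal{J}^\mathcal{X}(x)\|_\mathcal{U}=1$ and $\langle\mathcal{J}^\mathcal{X}(x),x\rangle_{\mathcal{U},\mathcal{X}}=\|x\|_\mathcal{X}$ for all $x\in\mathcal{X}$. Let $\hat w\in\mathcal{W}$ solve $C^*(C\bar y_h-g^\delta)+A^*\hat w=0$ and define $$\rho_y:=A\bar y_h-B\bar u_h,\qquad \rho_u:=\alpha\bar u_h-\mathcal{J}^\mathcal{X}(B^*\bar w_h),$$ $$D(B^*\hat w,B^*\bar w_h):=\langle\mathcal{J}^\mathcal{X}(B^*\hat w)-\mathcal{J}^\mathcal{X}(B^*\bar w_h),B^*(\hat w-\bar w_h)\rangle_{\mathcal{U},\mathcal{X}}.$$ Then $$\|C\bar y_h-C\bar y\|_\mathcal{G}^2\le\frac4\alpha\langle-\rho_u,B^*\hat w\rangle_{\mathcal{U},\mathcal{X}}+\frac4\alpha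 D(B^*\hat w,B^*\bar w_h)+4\|CA^{-1}\rho_y\|_\mathcal{G}^2,$$ $$J_\alpha(\bar u_h,\bar y_h)-J_\alpha(\bar u,\bar y)\le\frac1\alpha\langle-\rho_u,B^*\hat w\rangle_{\mathcal{U},\mathcal{X}}+\frac1\alpha D(B^*\hat w,B^*\bar w_h)+\|CA^{-1}\rho_y\|_\mathcal{G}\,\|C\bar y_h-g^\delta\|_\mathcal{G}.$$
   Context: $A^*\in L(\mathcal{W},\mathcal{Y}^* )$ and $C^*\in L(\mathcal{G},\mathcal{Y}^* )$ denote the adjoints defined by $\langle Ay,w\rangle_{\mathcal{W}^*,\mathcal{W}}=\langle y,A^*w\rangle_{\mathcal{Y},\mathcal{Y}^*}$ and $(Cy,g)_\mathcal{G}=\langle y,C^*g\rangle_{\mathcal{Y},\mathcal{Y}^*}$. $D$ is the symmetric Bregman distance associated with $\|\cdot\|_\mathcal{X}$. *)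

From HB Require Import structures.
From mathcomp Require Import all_boot all_order all_algebra.
From mathcomp Require Import all_classical all_reals all_analysis.
Set Implicit Arguments. Unset Strict Implicit. Unset Printing Implicit Defensive.
Import Order.TTheory GRing.Theory Num.Theory.
Import numFieldNormedType.Exports.
Local Open Scope classical_set_scope.
Local Open Scope ring_scope.

Section Defs.
Variable R : realType.

Definition lin_functional (V : lmodType R) (f : V -> R) : Prop :=
  forall (a : R) (x y : V), f (a *: x + y) = a * f x + f y.

Definition lin_map (V W : lmodType R) (f : V -> W) : Prop :=
  forall (a : R) (x y : V), f (a *: x + y) = a *: f x + f y.

Definition bounded_linear (V W : normedModType R) (f : V -> W) : Prop :=
  lin_map f /\ continuous f.

(* p : Vs -> V -> R realises Vs as the (topological) dual V^* of V:
   p is bilinear, the norm of Vs is the dual norm, and every continuous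
   linear functional on V is represented by a (unique) element of Vs. *)
Definition is_dual_pairing (V Vs : normedModType R) (p : Vs -> V -> R) : Prop :=
  [/\ (forall f, lin_functional (p f)),
      (forall x, lin_functional (fun f => p f x)),
      (forall f x, `|p f x| <= `|f| * `|x|),
      (forall f (eps : R), 0 < eps ->
          exists x, `|x| <= 1 /\ `|f| - eps < p f x) &
      (forall phi : V -> R, lin_functional phi -> continuous phi ->
          exists f, forall x, phi x = p f x)].

Definition reflexive_wrt (V Vs : normedModType R) (p : Vs -> V -> R) : Prop :=
  is_dual_pairing p /\
  (forall phi : Vs -> R, lin_functional phi -> continuous phi ->
      exists x, forall f, phi f = p f x).

Definition is_inner_product (G : normedModType R) (ip : G -> G -> R) : Prop :=
  [/\ (forall x y, ip x y = ip y x),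
      (forall y, lin_functional (ip ^~ y)) &
      (forall x, ip x x = `|x| ^+ 2)].

Definition findim_subspace (V : lmodType R) (S : set V) : Prop :=
  exists (n : nat) (e : 'I_n -> V),
    S = [set x | exists c : 'I_n -> R, x = \sum_(i < n) c i *: e i].

Definition zball (V : normedModType R) (r : R) : set V := [set u | `|u| <= r].

Definition Ralpha (V : normedModType R) (alpha : R) (u : V) : \bar R :=
  if `|u| <= alpha^-1 then 0%E else +oo%E.

Definition Jalpha (U Y G : normedModType R) (C : Y -> G) (g : G) (alpha : R)
  (u : U) (y : Y) : \bar R :=
  ((2^-1 * `|C y - g| ^+ 2)%:E + Ralpha alpha u)%E.

End Defs.

From HB Require Import structures.
From mathcomp Require Import all_boot all_order all_algebra.
From mathcomp Require Import all_classical all_reals all_analysis.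
From mathcomp Require Import ring lra.
Import Order.TTheory GRing.Theory Num.Theory.
Import numFieldNormedType.Exports.
Local Open Scope classical_set_scope.
Local Open Scope ring_scope.
Set Implicit Arguments. Unset Strict Implicit. Unset Printing Implicit Defensive.

(* Write a = C ybh - gd, b = C yb - gd and c = C yt - gd, where yt = A^-1 (B ubh)
   is the exact state of the discrete control.  Minimality of (ub, yb) along the
   segment towards the feasible pair (ubh, yt) gives (b, c - b) >= 0.  The adjoint
   equation of wh turns (c - b, a) into <ub - ubh, B^* wh>, which the ball
   constraint on ub and the duality map bound by the residual and Bregman terms.
   Since a - c = C A^-1 rho_y, both estimates then reduce to elementary
   inequalities between a, b, c in the inner product space G. *)

Lemma subrBB (V : zmodType) (x y z : V) : (x - z) - (y - z) = x - y.
Proof. by rewrite opprB addrA subrK. Qed.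

Section LinearMaps.
Variables (R : realType) (V W : lmodType R) (f : V -> W).
Hypothesis hf : lin_map f.

Lemma lin_mapD x y : f (x + y) = f x + f y.
Proof. by rewrite -[x in LHS]scale1r hf scale1r. Qed.

Lemma lin_map0 : f 0 = 0.
Proof. by apply: (addrI (f 0)); rewrite -lin_mapD !addr0. Qed.

Lemma lin_mapZ a x : f (a *: x) = a *: f x.
Proof. by rewrite -[a *: x]addr0 hf lin_map0 addr0. Qed.

Lemma lin_mapN x : f (- x) = - f x.
Proof. by rewrite -scaleN1r lin_mapZ scaleN1r. Qed.

Lemma lin_mapB x y : f (x - y) = f x - f y.
Proof. by rewrite lin_mapD lin_mapN. Qed.

End LinearMaps.

Lemma lin_functional_map (R : realType) (V : lmodType R) (f : V -> R) :
  lin_functional f -> lin_map (f : V -> R^o).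
Proof. by []. Qed.

Lemma ge0_of_ge0_quadratic (R : realFieldType) (p q : R) : 0 <= q ->
  (forall t, 0 < t -> t <= 1 -> 0 <= t * p + t ^+ 2 * q) -> 0 <= p.
Proof.
move=> q_ge0 hpq; rewrite leNgt; apply/negP => p_lt0.
pose t := - p / (q - p).
have qp_gt0 : 0 < q - p by lra.
have t_gt0 : 0 < t by rewrite divr_gt0 // oppr_gt0.
have t_le1 : t <= 1 by rewrite ler_pdivrMr // mul1r; lra.
have tq : t * q = t * p - p.
  by have := mulfVK (lt0r_neq0 qp_gt0) (- p); rewrite -/t mulrBr; lra.
have : t * p + t ^+ 2 * q = t ^+ 2 * p by rewrite expr2 -mulrA tq; ring.
have := hpq t t_gt0 t_le1; have := exprn_gt0 2 t_gt0; nra.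
Qed.

Section InnerProduct.
Variables (R : realType) (G : normedModType R) (ip : G -> G -> R).
Hypothesis hG : is_inner_product ip.

Lemma ip_sym x y : ip x y = ip y x.
Proof. by case: hG. Qed.

Lemma ip_norm x : ip x x = `|x| ^+ 2.
Proof. by case: hG. Qed.

Lemma ip_linearl z : lin_map ((ip ^~ z) : G -> R^o).
Proof. by case: hG => _ lin _; exact: lin. Qed.

Lemma ip_linearr z : lin_map ((ip z) : G -> R^o).
Proof. by move=> a x y; rewrite !(ip_sym z); exact: ip_linearl. Qed.

Lemma ipDl x y z : ip (x + y) z = ip x z + ip y z.
Proof. exact: (lin_mapD (ip_linearl z)). Qed.
Lemma ipBl x y z : ip (x - y) z = ip x z - ip y z.
Proof. exact: (lin_mapB (ip_linearl z)). Qed.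
Lemma ipZl a x z : ip (a *: x) z = a * ip x z.
Proof. exact: (lin_mapZ (ip_linearl z)). Qed.
Lemma ipDr x y z : ip z (x + y) = ip z x + ip z y.
Proof. exact: (lin_mapD (ip_linearr z)). Qed.
Lemma ipBr x y z : ip z (x - y) = ip z x - ip z y.
Proof. exact: (lin_mapB (ip_linearr z)). Qed.
Lemma ipZr a x z : ip z (a *: x) = a * ip z x.
Proof. exact: (lin_mapZ (ip_linearr z)). Qed.

Definition ipE := (ipBl, ipBr, ipDl, ipDr, ipZl, ipZr).

Lemma sqr_normD x y : `|x + y| ^+ 2 = `|x| ^+ 2 + 2 * ip x y + `|y| ^+ 2.
Proof. by rewrite -!ip_norm !ipE; have := ip_sym x y; lra. Qed.

Lemma sqr_normB x y : `|x - y| ^+ 2 = `|x| ^+ 2 - 2 * ip x y + `|y| ^+ 2.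
Proof. by rewrite -!ip_norm !ipE; have := ip_sym x y; lra. Qed.

Lemma ip_le_norm x y : ip x y <= `|x| * `|y|.
Proof.
have : `|x + y| ^+ 2 <= (`|x| + `|y|) ^+ 2.
  by rewrite lerXn2r ?nnegrE ?addr_ge0 ?ler_normD.
rewrite sqr_normD; nra.
Qed.

Lemma sqr_normD_le (x y : G) : `|x + y| ^+ 2 <= 2 * `|x| ^+ 2 + 2 * `|y| ^+ 2.
Proof.
rewrite sqr_normD; have := ip_le_norm x y; have := sqr_ge0 (`|x| - `|y|); nra.
Qed.

Lemma ip_ge0_of_segment_min b d :
  (forall t, 0 < t -> t <= 1 -> `|b| ^+ 2 <= `|b + t *: d| ^+ 2) ->
  0 <= ip b d.
Proof.
move=> hmin; suff : 0 <= 2 * ip b d by lra.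
apply: (@ge0_of_ge0_quadratic _ _ (`|d| ^+ 2)) => // t t0 t1.
have := hmin t t0 t1.
by rewrite sqr_normD ipZr normrZ gtr0_norm // exprMn; lra.
Qed.

Lemma sqr_normB_le_obtuse a b c : 0 <= ip b (c - b) ->
  `|a - b| ^+ 2 <= 4 * ip (c - b) a + 4 * `|a - c| ^+ 2.
Proof.
move=> obtuse.
have split_cb : `|c - b| ^+ 2 = ip (c - b) (c - a) + ip (c - b) a - ip b (c - b).
  by rewrite (ip_sym b) -ip_norm !ipE; lra.
have cs := ip_le_norm (c - b) (c - a).
have hcb : `|c - b| ^+ 2 <= 2 * ip (c - b) a + `|a - c| ^+ 2.
  rewrite (distrC c a) in cs; have := sqr_ge0 (`|c - b| - `|a - c|); nra.
have := sqr_normD_le (a - c) (c - b).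
by rewrite addrA subrK; lra.
Qed.

Lemma half_sqr_normB_le a b c :
  2^-1 * `|a| ^+ 2 - 2^-1 * `|b| ^+ 2 <= ip (c - b) a + `|a - c| * `|a|.
Proof.
have split_ab : 2^-1 * `|a| ^+ 2 - 2^-1 * `|b| ^+ 2
    = ip (a - c) a + ip (c - b) a - 2^-1 * `|a - b| ^+ 2.
  by rewrite sqr_normB -!ip_norm !ipE (ip_sym b); lra.
have := ip_le_norm (a - c) a.
by rewrite split_ab; nra.
Qed.

End InnerProduct.

Lemma norm_segment_le (R : realType) (V : normedModType R) (r t : R) (u v : V) :
  `|u| <= r -> `|v| <= r -> 0 <= t -> t <= 1 -> `|u + t *: (v - u)| <= r.
Proof.
move=> hu hv t0 t1.
have -> : u + t *: (v - u) = (1 - t) *: u + t *: v.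
  by rewrite scalerBr scalerBl scale1r addrAC addrA.
apply: le_trans (ler_normD _ _) _.
rewrite !normrZ (ger0_norm t0) ger0_norm ?subr_ge0 //.
nra.
Qed.

Section DualityMap.
Variables (R : realType) (X U : normedModType R) (pX : U -> X -> R) (J : X -> U).
Hypothesis hX : is_dual_pairing pX.
Hypothesis hJ : forall x, `|J x| = 1 /\ pX (J x) x = `|x|.

Lemma pairing_le_norm f x : pX f x <= `|f| * `|x|.
Proof. by case: hX => _ _ bound _ _; exact: le_trans (ler_norm _) (bound f x). Qed.

Lemma pairingBl f g x : pX (f - g) x = pX f x - pX g x.
Proof. by case: hX => _ lin _ _ _; exact: (lin_mapB (lin_functional_map (lin x))). Qed.

Lemma pairingZl a f x : pX (a *: f) x = a * pX f x.
Proof. by case: hX => _ lin _ _ _; exact: (lin_mapZ (lin_functional_map (lin x))). Qed.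

Lemma pairingBr f x y : pX f (x - y) = pX f x - pX f y.
Proof. by case: hX => lin _ _ _ _; exact: (lin_mapB (lin_functional_map (lin f))). Qed.

Lemma pairingB_le_residual_bregman (alpha : R) (u v : U) (x x' : X) :
  0 < alpha -> `|u| <= alpha^-1 ->
  pX (u - v) x <= alpha^-1 * pX (- (alpha *: v - J x')) x
                  + alpha^-1 * pX (J x - J x') (x - x').
Proof.
move=> alpha_gt0 u_ball.
have pu : pX u x <= alpha^-1 * `|x|.
  exact: le_trans (pairing_le_norm u x) (ler_wpM2r (normr_ge0 _) u_ball).
have pJ : pX (J x) x' <= `|x'|.
  by have := pairing_le_norm (J x) x'; rewrite (hJ x).1 mul1r.
have alphaK : alpha^-1 * (alpha * pX v x) = pX v x.
  by rewrite mulrA mulVf ?mul1r // gt_eqF.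
have : 0 <= alpha^-1 * (`|x'| - pX (J x) x').
  by rewrite mulr_ge0 // ?invr_ge0 ?subr_ge0 // ltW.
rewrite opprB !pairingBl !pairingBr pairingZl (hJ x).2 (hJ x').2.
lra.
Qed.

End DualityMap.

Section OptimalControl.
Variables (R : realType) (X U W Ws Y Ys G : normedModType R).
Variables (pX : U -> X -> R) (pW : Ws -> W -> R) (pY : Ys -> Y -> R).
Variables (ip : G -> G -> R) (gd : G) (alpha : R).
Variables (A : Y -> Ws) (B : U -> Ws) (C : Y -> G).
Variables (Astar : W -> Ys) (Bstar : W -> X) (Cstar : G -> Ys).
Hypotheses (hY : is_dual_pairing pY) (hG : is_inner_product ip).
Hypotheses (hA : lin_map A) (hB : lin_map B) (hC : lin_map C).
Hypothesis hAadj : forall y w, pW (A y) w = pY (Astar w) y.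
Hypothesis hBadj : forall u w, pW (B u) w = pX u (Bstar w).
Hypothesis hCadj : forall y g, ip (C y) g = pY (Cstar g) y.

Local Notation J := (@Jalpha R U Y G C gd alpha).

Lemma Jalpha_ball u y : `|u| <= alpha^-1 -> J u y = (2^-1 * `|C y - gd| ^+ 2)%:E.
Proof. by move=> u_ball; rewrite /Jalpha /Ralpha u_ball adde0. Qed.

Lemma Jalpha_le_ball u y u' y' :
  (J u y <= J u' y')%E -> `|u'| <= alpha^-1 -> `|u| <= alpha^-1.
Proof.
move=> + u'_ball; rewrite (Jalpha_ball y' u'_ball) /Jalpha /Ralpha.
by case: ifP => // _; rewrite addey // leye_eq.
Qed.

Lemma min_first_order ub yb u' y' :
  A yb = B ub -> `|ub| <= alpha^-1 ->
  (forall u y, A y = B u -> (J ub yb <= J u y)%E) ->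
  A y' = B u' -> `|u'| <= alpha^-1 ->
  0 <= ip (C yb - gd) (C y' - C yb).
Proof.
move=> feas ub_ball min feas' u'_ball.
apply: (ip_ge0_of_segment_min hG) => t t0 t1.
pose ut := ub + t *: (u' - ub); pose yt := yb + t *: (y' - yb).
have feas_t : A yt = B ut.
  by rewrite (lin_mapD hA) (lin_mapZ hA) (lin_mapB hA) feas feas'
             (lin_mapD hB) (lin_mapZ hB) (lin_mapB hB).
have ut_ball : `|ut| <= alpha^-1 by apply: norm_segment_le => //; exact: ltW.
have := min _ _ feas_t; rewrite !Jalpha_ball // lee_fin.
rewrite /yt (lin_mapD hC) (lin_mapZ hC) (lin_mapB hC) addrAC.
lra.
Qed.

Lemma adjoint_pairing_eq u u' y y' r w :
  A y = B u -> A y' = B u' -> Cstar r + Astar w = 0 ->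
  pX (u - u') (Bstar w) = ip (C y' - C y) r.
Proof.
move=> feas feas' adj.
have Astar_w : Astar w = - Cstar r by apply/eqP; rewrite -addr_eq0 addrC adj.
case: hY => _ lin _ _ _.
rewrite -hBadj (lin_mapB hB) -feas -feas' -(lin_mapB hA) hAadj Astar_w.
rewrite (lin_mapN (lin_functional_map (lin _))) -hCadj (lin_mapB hC) !(ipBl hG).
lra.
Qed.

End OptimalControl.

Theorem proposition4p2 (R : realType)
  (X U W Ws Y Ys G : completeNormedModType R)
  (pX : U -> X -> R) (pW : Ws -> W -> R) (pY : Ys -> Y -> R) (ip : G -> G -> R)
  (hX : is_dual_pairing pX) (hW : reflexive_wrt pW) (hY : reflexive_wrt pY)
  (hG : is_inner_product ip)
  (gd : G) (alpha : R) (halpha : 0 < alpha)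
  (A : Y -> Ws) (Ainv : Ws -> Y) (B : U -> Ws) (C : Y -> G)
  (Astar : W -> Ys) (Bstar : W -> X) (Cstar : G -> Ys)
  (hA : bounded_linear A) (hAinv : bounded_linear Ainv)
  (hAinvl : forall y, Ainv (A y) = y) (hAinvr : forall z, A (Ainv z) = z)
  (hB : bounded_linear B) (hC : bounded_linear C)
  (hBstar : bounded_linear Bstar)
  (hAadj : forall y w, pW (A y) w = pY (Astar w) y)
  (hBadj : forall u w, pW (B u) w = pX u (Bstar w))
  (hCadj : forall y g, ip (C y) g = pY (Cstar g) y)
  (Uh : set U) (Yh : set Y) (Wh : set W)
  (hUh : findim_subspace Uh) (hYh : findim_subspace Yh) (hWh : findim_subspace Wh)
  (ub : U) (yb : Y)
  (hcont_feas : A yb = B ub)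
  (hcont_min : forall u y, A y = B u ->
     (Jalpha C gd alpha ub yb <= Jalpha C gd alpha u y)%E)
  (ubh : U) (ybh : Y) (wbh : W)
  (hubh : Uh ubh) (hybh : Yh ybh) (hwbh : Wh wbh)
  (hdisc_feas : forall wh, Wh wh -> pW (A ybh - B ubh) wh = 0)
  (hdisc_min : forall u y, Uh u -> Yh y ->
     (forall wh, Wh wh -> pW (A y - B u) wh = 0) ->
     (Jalpha C gd alpha ubh ybh <= Jalpha C gd alpha u y)%E)
  (hadj_disc : forall yh, Yh yh ->
     pY (Cstar (C ybh - gd) + Astar wbh) yh = 0)
  (hball : (zball (V:=U) alpha^-1 `&` Uh) ubh)
  (hvar : forall uh, (zball (V:=U) alpha^-1 `&` Uh) uh ->
     pX (uh - ubh) (Bstar wbh) <= 0)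
  (JX : X -> U)
  (hJX : forall x, `|JX x| = 1 /\ pX (JX x) x = `|x|)
  (wh : W) (hwh : Cstar (C ybh - gd) + Astar wh = 0) :
  let rho_y := A ybh - B ubh in
  let rho_u := alpha *: ubh - JX (Bstar wbh) in
  let D := pX (JX (Bstar wh) - JX (Bstar wbh)) (Bstar (wh - wbh)) in
  `|C ybh - C yb| ^+ 2 <=
     4 / alpha * pX (- rho_u) (Bstar wh) + 4 / alpha * D
     + 4 * `|C (Ainv rho_y)| ^+ 2
  /\
  (Jalpha C gd alpha ubh ybh - Jalpha C gd alpha ub yb <=
     (alpha^-1 * pX (- rho_u) (Bstar wh) + alpha^-1 * D
      + `|C (Ainv rho_y)| * `|C ybh - gd|)%:E)%E.
Proof.
move=> rho_y rho_u D.
pose yt := Ainv (B ubh).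
have feas_t : A yt = B ubh := hAinvr _.
have ubh_ball : `|ubh| <= alpha^-1 by case: hball.
have ub_ball : `|ub| <= alpha^-1 := Jalpha_le_ball (hcont_min _ _ feas_t) ubh_ball.
have obtuse := min_first_order hG hA.1 hB.1 hC.1 hcont_feas ub_ball hcont_min feas_t ubh_ball.
have adj := adjoint_pairing_eq hY.1 hG hA.1 hB.1 hC.1 hAadj hBadj hCadj hcont_feas feas_t hwh.
have residual : ip (C yt - C yb) (C ybh - gd)
    <= alpha^-1 * pX (- rho_u) (Bstar wh) + alpha^-1 * D.
  rewrite -adj /rho_u /D (lin_mapB hBstar.1).
  exact (pairingB_le_residual_bregman hX hJX ubh _ _ halpha ub_ball).
have rho_y_state : C (Ainv rho_y) = (C ybh - gd) - (C yt - gd).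
  by rewrite /rho_y (lin_mapB hAinv.1) hAinvl (lin_mapB hC.1) subrBB.
rewrite -(subrBB (C yt) (C yb) gd) in obtuse residual.
rewrite rho_y_state; split.
  have := sqr_normB_le_obtuse hG (C ybh - gd) obtuse.
  by rewrite subrBB; lra.
rewrite (Jalpha_ball _ _ _ ubh_ball) (Jalpha_ball _ _ _ ub_ball) -EFinB lee_fin.
have := half_sqr_normB_le hG (C ybh - gd) (C yb - gd) (C yt - gd).
lra.
Qed.
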